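(* Let $\mathcal{S}$ be a sheaf of pseudometric spaces on a topological space $(X,\mathcal{T}_X)$ with assignment $a$, and $\mathcal{R}$ a sheaf of pseudometric spaces on a topological space $(Y,\mathcal{T}_Y)$ with assignment $b$. Let $m:(\mathcal{S},a)\to(\mathcal{R},b)$ be a morphism along a continuous map $f:X\to Y$ all of whose component maps are Lipschitz continuous with constant $K$. Then for every open $U\subseteq Y$, $c_{\mathcal{R}}(b,U)\le K\,c_{\mathcal{S}}(a,f^{-1}(U))$.
   Context: A sheaf of pseudometric spaces on $(X,\mathcal{T})$ is a sheaf of sets $\mathcal{S}$ with a pseudometric $d_W$ on each $\mathcal{S}(W)$ making all restriction maps continuous. An assignment is any $a\in\prod_{W\in\mathcal{T}}\mathcal{S}(W)$. A morphism $(\mathcal{S},a)\to(\mathcal{R},b)$ along continuous $f:X\to Y$ consists of component maps $m_U:\mathcal{S}(f^{-1}(U))\to\mathcal{R}(U)$, $U\in\mathcal{T}_Y$, such that $\mathcal{R}(U\subseteq V)\circ m_V=m_U\circ\mathcal{S}(f^{-1}(U)\subseteq f^{-1}(V))$ for all $U\subseteq V$ in $\mathcal{T}_Y$ and $m_U(a(f^{-1}(U)))=b(U)$ for all $U\in\mathcal{T}_Y$. A map $g$ between pseudometric spaces is Lipschitz with constant $K$ if $d(g(x),g(y))\le K\,d(x,y)$ for all $x,y$. For open $U$, the local consistency radius is $c_{\mathcal{S}}(a,U)=\sup_{W_1\subseteq W_2\subseteq U,\ W_i\text{ open}}d_{W_1}\big(\mathcal{S}(W_1\subseteq W_2)(a(W_2)),a(W_1)\big)$.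 *)

From HB Require Import structures.
From mathcomp Require Import all_boot all_order all_algebra.
From mathcomp Require Import all_classical all_reals all_analysis.
Set Implicit Arguments. Unset Strict Implicit. Unset Printing Implicit Defensive.
Import Order.TTheory GRing.Theory Num.Theory.
Local Open Scope classical_set_scope.
Local Open Scope ring_scope.

Record opn (X : topologicalType) := Opn { oset : set X ; oopen : open oset }.
Arguments Opn {X} oset oopen.

Definition opn_inter (X : topologicalType) (U V : opn X) : opn X :=
  Opn (oset U `&` oset V) (openI (oopen U) (oopen V)).

Definition opn_pre (X Y : topologicalType) (f : X -> Y) (hf : continuous f)
  (U : opn Y) : opn X :=
  Opn (f @^-1` oset U) (proj1 (continuousP f) hf (oset U) (oopen U)).

Record sheafPM (R : realType) (X : topologicalType) := SheafPM {
  sec : opn X -> Type ;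
  res : forall U V : opn X, oset U `<=` oset V -> sec V -> sec U ;
  res_id : forall (U : opn X) (h : oset U `<=` oset U) (s : sec U), res h s = s ;
  res_comp : forall (U V W : opn X) (h1 : oset U `<=` oset V)
      (h2 : oset V `<=` oset W) (h3 : oset U `<=` oset W) (s : sec W),
      res h1 (res h2 s) = res h3 s ;
  locality : forall (U : opn X) (I : Type) (Ui : I -> opn X)
      (hcov : oset U = \bigcup_(i in setT) oset (Ui i))
      (hi : forall i, oset (Ui i) `<=` oset U) (s t : sec U),
      (forall i, res (hi i) s = res (hi i) t) -> s = t ;
  gluing : forall (U : opn X) (I : Type) (Ui : I -> opn X)
      (hcov : oset U = \bigcup_(i in setT) oset (Ui i))
      (hi : forall i, oset (Ui i) `<=` oset U) (si : forall i, sec (Ui i)),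
      (forall i j (hl : oset (opn_inter (Ui i) (Ui j)) `<=` oset (Ui i))
                  (hr : oset (opn_inter (Ui i) (Ui j)) `<=` oset (Ui j)),
          res hl (si i) = res hr (si j)) ->
      exists s : sec U, forall i, res (hi i) s = si i ;
  dist : forall U : opn X, sec U -> sec U -> R ;
  dist_refl : forall U (s : sec U), dist s s = 0 ;
  dist_sym : forall U (s t : sec U), dist s t = dist t s ;
  dist_tri : forall U (s t u : sec U), dist s u <= dist s t + dist t u ;
  res_cont : forall (U V : opn X) (h : oset U `<=` oset V) (s : sec V) (e : R),
      0 < e -> exists2 d : R, 0 < d &
      forall t : sec V, dist s t < d -> dist (res h s) (res h t) < e
}.
Arguments res {R X} s0 {U V} h _ : rename.
Arguments dist {R X} s0 {U} _ _ : rename.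

Definition assignment (R : realType) (X : topologicalType) (S : sheafPM R X) :=
  forall W : opn X, sec S W.

Definition is_morphism (R : realType) (X Y : topologicalType)
  (S : sheafPM R X) (Rs : sheafPM R Y) (a : assignment S) (b : assignment Rs)
  (f : X -> Y) (hf : continuous f)
  (m : forall U : opn Y, sec S (opn_pre hf U) -> sec Rs U) : Prop :=
  (forall (U V : opn Y) (h : oset U `<=` oset V)
          (h' : oset (opn_pre hf U) `<=` oset (opn_pre hf V))
          (s : sec S (opn_pre hf V)),
      res Rs h (m V s) = m U (res S h' s)) /\
  (forall U : opn Y, m U (a (opn_pre hf U)) = b U).

Definition lipschitz_with (R : realType) (A B : Type) (dA : A -> A -> R)
  (dB : B -> B -> R) (K : R) (g : A -> B) : Prop :=
  forall x y, dB (g x) (g y) <= K * dA x y.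

Definition cons_rad (R : realType) (X : topologicalType) (S : sheafPM R X)
  (a : assignment S) (U : opn X) : \bar R :=
  ereal_sup [set r | exists (W1 W2 : opn X) (h : oset W1 `<=` oset W2),
      oset W2 `<=` oset U /\ r = (dist S (res S h (a W2)) (a W1))%:E].

From mathcomp Require Import all_boot all_order all_algebra.
From mathcomp Require Import all_classical all_reals all_analysis.
Import Order.TTheory GRing.Theory Num.Theory.
Local Open Scope classical_set_scope.
Local Open Scope ring_scope.

(* By naturality of [m] and [m (a (f^-1 W)) = b W], each term
   [d(b(W2)|W1, b(W1))] of the supremum defining [c(b, U)] is the image under
   the [K]-Lipschitz map [m W1] of the pair giving the term of [c(a, f^-1 U)]
   at [f^-1 W1 ⊆ f^-1 W2]. *)

Lemma opn_pre_sub {X Y : topologicalType} {f : X -> Y} (hf : continuous f)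
    {U V : opn Y} :
  oset U `<=` oset V -> oset (opn_pre hf U) `<=` oset (opn_pre hf V).
Proof. by move=> hUV x /= /hUV. Qed.

Lemma cons_rad_ub {R : realType} {X : topologicalType} {S : sheafPM R X}
    (a : assignment S) {U W1 W2 : opn X} (h : oset W1 `<=` oset W2) :
  oset W2 `<=` oset U ->
  ((dist S (res S h (a W2)) (a W1))%:E <= cons_rad a U)%E.
Proof. by move=> hW2; apply: ereal_sup_ubound; exists W1, W2, h. Qed.

Lemma morphism_consistency_le {R : realType} {X Y : topologicalType}
    {S : sheafPM R X} {Rs : sheafPM R Y} {a : assignment S} {b : assignment Rs}
    {f : X -> Y} {hf : continuous f}
    {m : forall U : opn Y, sec S (opn_pre hf U) -> sec Rs U} {K : R} :
  is_morphism a b m ->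
  (forall U : opn Y,
    lipschitz_with (dist S (U := opn_pre hf U)) (dist Rs (U := U)) K (m U)) ->
  forall (W1 W2 : opn Y) (h : oset W1 `<=` oset W2),
  dist Rs (res Rs h (b W2)) (b W1) <=
    K * dist S (res S (opn_pre_sub hf h) (a (opn_pre hf W2))) (a (opn_pre hf W1)).
Proof.
move=> [hres hb] hL W1 W2 h.
by rewrite -(hb W1) -(hb W2) (hres _ _ h (opn_pre_sub hf h)); exact: hL.
Qed.

Theorem lemma42 (R : realType) (X Y : topologicalType)
  (S : sheafPM R X) (Rs : sheafPM R Y) (a : assignment S) (b : assignment Rs)
  (f : X -> Y) (hf : continuous f)
  (m : forall U : opn Y, sec S (opn_pre hf U) -> sec Rs U)
  (hm : is_morphism a b m)
  (K : R) (hK : 0 <= K)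
  (hL : forall U : opn Y, lipschitz_with (dist S (U := opn_pre hf U)) (dist Rs (U := U)) K (m U))
  (U : opn Y) :
  (cons_rad b U <= K%:E * cons_rad a (opn_pre hf U))%E.
Proof.
apply: ub_ereal_sup => _ [W1 [W2 [h [hW2 ->]]]].
have hKE : (0 <= K%:E)%E by rewrite lee_fin.
apply: le_trans (lee_wpmul2l hKE (cons_rad_ub a (opn_pre_sub hf h) (opn_pre_sub hf hW2))).
by rewrite -EFinM lee_fin; exact: morphism_consistency_le hm hL _ _ h.
Qed.
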